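(* Let $S\subseteq\mathbb{R}^n$ be a closed set and $C\subseteq\mathbb{R}^n$ a convex $S$-free set. Assume $C=\{x\in\mathbb{R}^n : \alpha^\mathsf{T} x\le\beta\ \forall(\alpha,\beta)\in\Gamma\}$ for some family $\Gamma$ of inequalities, and that for every $(\alpha,\beta)\in\Gamma$ there is a point $x\in S\cap C$ that exposes $(\alpha,\beta)$ with respect to $C$. Then $C$ is maximal $S$-free.
   Context: A convex set $C$ is $S$-free if $\operatorname{int}(C)\cap S=\emptyset$, and maximal $S$-free if it is $S$-free and no $S$-free convex set strictly contains it. An inequality $\alpha^\mathsf{T} x\le\beta$ (written $(\alpha,\beta)$) is valid for $C$ if it holds on $C$; it is non-trivial if $\alpha\neq0$. A point $x_0$ exposes a valid inequality $(\alpha,\beta)$ with respect to convex $C$ if $\alpha^\mathsf{T} x_0=\beta$ and for every non-trivial valid inequality $\gamma^\mathsf{T} x\le\delta$ for $C$ with $\gamma^\mathsf{T} x_0=\delta$ there is $\mu>0$ with $\gamma=\mu\alpha$ and $\delta=\mu\beta$. *)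

(* R^n is modelled as row vectors 'rV[R]_n
   over a realType R, with their canonical (normed) topology. *)
From HB Require Import structures.
From mathcomp Require Import all_boot all_order all_algebra.
From mathcomp Require Import all_classical all_reals all_analysis.
Set Implicit Arguments. Unset Strict Implicit. Unset Printing Implicit Defensive.
Import Order.TTheory GRing.Theory Num.Theory.
Import numFieldNormedType.Exports.
Local Open Scope classical_set_scope.
Local Open Scope ring_scope.

Section Defs.
Variables (R : realType) (n : nat).
Notation V := 'rV[R]_n.

Definition dotp (u v : V) : R := \sum_(i < n) u ord0 i * v ord0 i.

Definition convexR (C : set V) : Prop := convex_set (C : set (convex_lmodType V)).

Definition S_free (S C : set V) : Prop :=
  convexR C /\ interior C `&` S = set0.

Definition maximal_S_free (S C : set V) : Prop :=
  S_free S C /\ forall D : set V, S_free S D -> C `<=` D -> D = C.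

Definition valid_ineq (C : set V) (ab : V * R) : Prop :=
  forall x, C x -> dotp ab.1 x <= ab.2.

Definition exposes (C : set V) (x0 : V) (ab : V * R) : Prop :=
  valid_ineq C ab /\ dotp ab.1 x0 = ab.2 /\
  forall gd : V * R, gd.1 != 0 -> valid_ineq C gd -> dotp gd.1 x0 = gd.2 ->
    exists2 mu : R, 0 < mu & gd.1 = mu *: ab.1 /\ gd.2 = mu * ab.2.

End Defs.

(* Let D be a convex S-free set containing C, and y a point of D.  If y violated
   some (alpha, beta) in Gamma, take x in S ∩ C exposing it.  As D is S-free, x is
   not interior to D, so some hyperplane g^T d <= g^T x supports D at x.  It is
   valid for C and tight at x, hence a positive multiple of (alpha, beta), and
   g^T y <= g^T x then yields alpha^T y <= beta.
   The supporting hyperplane comes from the cone K = R_{>0} (D - x).  If K is dense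
   it is everything, because a convex set approaching every vertex of the cube
   {-1, 1}^n contains its centre; then x is interior.  Otherwise a point z outside
   the closure of K is separated from K by its nearest point in that closure. *)

From HB Require Import structures.
From mathcomp Require Import all_boot all_order all_algebra.
From mathcomp Require Import all_classical all_reals all_analysis.
From mathcomp Require Import ring lra.
Import Order.TTheory GRing.Theory Num.Theory.
Import numFieldNormedType.Exports.
Local Open Scope classical_set_scope.
Local Open Scope ring_scope.
Set Implicit Arguments. Unset Strict Implicit.

Section ConvexGeometry.
Variables (R : realType) (n : nat).
Local Notation V := 'rV[R]_n.
Implicit Types (D E T : set V) (a b p q t u v x y z : V).

Lemma convexRP D : convexR D <->
  forall a b (l : R), 0 <= l -> l <= 1 -> D a -> D b -> D (l *: a + (1 - l) *: b).
Proof.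
split=> [cD a b l l0 l1 Da Db | cD a b l].
  by have := cD a b (Itv01 l0 l1) (mem_set Da) (mem_set Db); rewrite inE.
by rewrite !inE => Da Db; apply: cD.
Qed.

Lemma dotpBr a b c : dotp a (b - c) = dotp a b - dotp a c.
Proof. by rewrite /dotp -sumrB; apply: eq_bigr => i _; rewrite !mxE mulrBr. Qed.

Lemma dotpZr a b (s : R) : dotp a (s *: b) = s * dotp a b.
Proof. by rewrite /dotp mulr_sumr; apply: eq_bigr => i _; rewrite !mxE mulrCA. Qed.

Lemma dotpZl a b (s : R) : dotp (s *: a) b = s * dotp a b.
Proof. by rewrite /dotp mulr_sumr; apply: eq_bigr => i _; rewrite !mxE mulrA. Qed.

Lemma dotpp_ge0 u : 0 <= dotp u u.
Proof. by apply: sumr_ge0 => i _; rewrite -expr2 sqr_ge0. Qed.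

Lemma sqr_coord_le_dotpp u i : u ord0 i ^+ 2 <= dotp u u.
Proof.
by rewrite /dotp (bigD1 i) //= expr2 lerDl; apply: sumr_ge0 => j _; rewrite -expr2 sqr_ge0.
Qed.

Lemma dotpp_subZ u v (l : R) :
  dotp (u - l *: v) (u - l *: v) = dotp u u - 2 * l * dotp u v + l ^+ 2 * dotp v v.
Proof.
rewrite /dotp !mulr_sumr -sumrB -big_split /=.
by apply: eq_bigr => i _; rewrite !mxE; ring.
Qed.

Lemma continuous_dotp (T : topologicalType) (f g : T -> V) :
  continuous f -> continuous g -> continuous (fun w => dotp (f w) (g w)).
Proof.
move=> fc gc; rewrite /dotp.
apply: (continuous_big (@add_continuous R)) => i _ w.
apply: (@continuousM _ _ (fun w => f w ord0 i) (fun w => g w ord0 i)).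
  exact: (continuous_comp (fc w) (@coord_continuous R 1 n ord0 i (f w))).
exact: (continuous_comp (gc w) (@coord_continuous R 1 n ord0 i (g w))).
Qed.

Lemma norm_convex_comb_le (l r s c : R) : 0 <= l -> l <= 1 ->
  `|r| <= c -> `|s| <= c -> `|l * r + (1 - l) * s| <= c.
Proof.
by move=> l0 l1 /ler_normlP[r1 r2] /ler_normlP[s1 s2]; apply/ler_normlP; split; nra.
Qed.

Lemma convex_comb_eq0 (r s : R) : s < 0 -> 0 < r ->
  exists l, [/\ 0 <= l, l <= 1 & l * r + (1 - l) * s = 0].
Proof.
move=> s0 r0; have rs : 0 < r - s by lra.
exists (- s / (r - s)); split.
- by rewrite divr_ge0 ?oppr_ge0 ?ltW.
- by rewrite ler_pdivrMr // mul1r; lra.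
- by field; rewrite gt_eqF.
Qed.

Definition sign_vec (I : {set 'I_n}) : V := \row_i (if i \in I then 1 else -1).

(* Averaging the witnesses for [k |: I] and [I :\ k] kills coordinate k while
   keeping the first k coordinates within 1/2 of [sign_vec I]. *)
Lemma convex_zero_first_coords k : (k <= n)%N -> forall E, convexR E ->
  (forall I, exists2 p, E p &
     forall i : 'I_n, (i < k)%N -> `|p ord0 i - sign_vec I ord0 i| <= 2^-1) ->
  exists2 p, E p & forall i : 'I_n, (i < k)%N -> p ord0 i = 0.
Proof.
elim: k => [_ E _ near | k IH kn E cE near].
  by have [p Ep _] := near finset.set0; exists p.
pose ik := Ordinal kn.
have cE' : convexR [set p | E p /\ p ord0 ik = 0].
  apply/convexRP => a b l l0 l1 [Ea a0] [Eb b0]; split; first exact: (convexRP E).1.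
  by rewrite !mxE a0 b0 !mulr0 addr0.
have [|p [Ep pk0] p0] := IH (ltnW kn) _ cE'.
  move=> I.
  have [pp Epp npp] := near (ik |: I); have [pm Epm npm] := near (I :\ ik).
  have ppk : 2^-1 <= pp ord0 ik.
    by move: (npp ik (ltnSn k)); rewrite !mxE setU11 => /ler_normlP[]; lra.
  have pmk : pm ord0 ik <= - 2^-1.
    by move: (npm ik (ltnSn k)); rewrite !mxE setD11 => /ler_normlP[]; lra.
  have [l [l0 l1 lk]] :
      exists l, [/\ 0 <= l, l <= 1 & l * pp ord0 ik + (1 - l) * pm ord0 ik = 0].
    by apply: convex_comb_eq0; lra.
  exists (l *: pp + (1 - l) *: pm); first by split; [exact: (convexRP E).1 | rewrite !mxE].
  move=> i ilt; have ni : i != ik by rewrite -val_eqE /= neq_ltn ilt.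
  have := npp i (ltnW ilt); have := npm i (ltnW ilt).
  rewrite !mxE in_setU1 in_setD1 (negbTE ni) /= => nm np.
  set si := (if i \in I then 1 else -1) in nm np *.
  have -> : l * pp ord0 i + (1 - l) * pm ord0 i - si =
            l * (pp ord0 i - si) + (1 - l) * (pm ord0 i - si) by ring.
  exact: norm_convex_comb_le.
exists p => // i; rewrite ltnS leq_eqVlt => /predU1P[iE | ]; last exact: p0.
by have -> : i = ik by apply: val_inj.
Qed.

Lemma convex_near_sign_vecs0 E : convexR E ->
  (forall I, exists2 p, E p & forall i, `|p ord0 i - sign_vec I ord0 i| <= 2^-1) -> E 0.
Proof.
move=> cE near; have [|p Ep p0] := @convex_zero_first_coords n (leqnn n) E cE.
  by move=> I; have [p Ep np] := near I; exists p.
by suff -> : (0 : V) = p by []; apply/rowP => i; rewrite !mxE p0.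
Qed.

Lemma convexR_affine_preimage D y (r : R) :
  convexR D -> convexR [set v | D (y + r *: v)].
Proof.
move=> /convexRP cD; apply/convexRP => a b l l0 l1 Da Db /=.
have -> : y + r *: (l *: a + (1 - l) *: b) = l *: (y + r *: a) + (1 - l) *: (y + r *: b).
  by apply/rowP => i; rewrite !mxE; ring.
exact: cD.
Qed.

Lemma ball_coord x y (e : R) : ball x e y -> forall i, `|x ord0 i - y ord0 i| < e.
Proof. by case=> _ xy i; exact: xy. Qed.

Lemma convex_closure_setT T : convexR T -> closure T = setT -> T = setT.
Proof.
move=> cT clT; apply/seteqP; split=> // u _.
have cE := convexR_affine_preimage (y := u) (r := 1) cT.
suff : [set v | T (u + 1 *: v)] 0 by rewrite /= scaler0 addr0.
apply: convex_near_sign_vecs0 cE _ => I.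
have : closure T (u + sign_vec I) by rewrite clT.
case/(_ _ (nbhsx_ballx _ (2^-1) _))=> [|t [Tt ut]]; first by rewrite invr_gt0 ltr0n.
exists (t - u); first by rewrite /= scale1r addrC subrK.
move=> i; apply: ltW; rewrite distrC; have := ball_coord ut i; rewrite !mxE.
by rewrite opprB addrA [_ + u _ _]addrC.
Qed.

Lemma interior_of_absorbing D x : convexR D -> D x ->
  (forall v, exists2 t, 0 < t & D (x + t *: v)) -> interior D x.
Proof.
move=> cD Dx absorb.
have shrink v (t r : R) : D (x + t *: v) -> 0 < r -> r <= t -> D (x + r *: v).
  move=> Dt r0 rt; have t0 : 0 < t := lt_le_trans r0 rt.
  have -> : x + r *: v = (r / t) *: (x + t *: v) + (1 - r / t) *: x.
    by apply/rowP => i; rewrite !mxE; field; rewrite gt_eqF.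
  by apply: (convexRP D).1 => //; [rewrite divr_ge0 ?ltW | rewrite ler_pdivrMr // mul1r].
have /choice[rad radP] : forall I, exists t : R, 0 < t /\ D (x + t *: sign_vec I).
  by move=> I; have [t t0 Dt] := absorb (sign_vec I); exists t.
pose r := \big[Num.min/1]_I rad I.
have r0 : 0 < r by elim/big_ind: r => // [a b a0 b0 | I _]; [rewrite lt_min a0 | case: (radP I)].
have Dr I : D (x + r *: sign_vec I).
  by have [_ DI] := radP I; apply: shrink DI r0 _; exact: bigmin_le.
apply/nbhs_ballP; exists (r / 2) => [|y /ball_coord xy]; first exact: divr_gt0.
have cE := convexR_affine_preimage (y := y) (r := r) cD.
suff : [set v | D (y + r *: v)] 0 by rewrite /= scaler0 addr0.
apply: convex_near_sign_vecs0 cE _ => I.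
exists (sign_vec I - r^-1 *: (y - x)).
  rewrite /=; suff -> : y + r *: (sign_vec I - r^-1 *: (y - x)) = x + r *: sign_vec I.
    exact: Dr.
  by apply/rowP => i; rewrite !mxE; field; rewrite gt_eqF.
move=> i; rewrite !mxE addrAC subrr add0r normrN normrM gtr0_norm ?invr_gt0 //.
by rewrite ler_pdivrMl // distrC; exact: ltW (xy i).
Qed.

Lemma closure_convex_comb T p t (l : R) : convexR T -> closure T p -> T t ->
  0 <= l -> l <= 1 -> closure T (l *: t + (1 - l) *: p).
Proof.
move=> /convexRP cT Tp Tt l0 l1 B.
pose phi w := l *: t + (1 - l) *: w.
have phic : continuous phi.
  move=> w; apply: (@continuousD _ _ _ (fun=> l *: t) (fun w => (1 - l) *: w)).
    exact: cst_continuous.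
  by apply: continuousZ; [exact: cst_continuous | exact: cvg_id].
by move=> /phic /Tp[w [Tw Bw]]; exists (phi w); split=> //; exact: cT.
Qed.

Lemma closure_nearest T z : T !=set0 ->
  exists2 p, closure T p &
    forall q, closure T q -> dotp (z - p) (z - p) <= dotp (z - q) (z - q).
Proof.
have sq_bound (r : R) : r <= 1 + r ^+ 2 /\ - r <= 1 + r ^+ 2 by split; nra.
case=> t0 Tt0; pose f v := dotp (z - v) (z - v); pose M := 1 + f t0.
pose box := [set v : V | forall i, `[z ord0 i - M, z ord0 i + M]%classic (v ord0 i)].
have in_box v : f v <= f t0 -> box v.
  move=> fv i; have := sqr_coord_le_dotpp (z - v) i; rewrite !mxE /= in_itv /= => sq.
  have [] := sq_bound (z ord0 i - v ord0 i).
  by rewrite /M /f in fv *; move=> ? ?; apply/andP; split; lra.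
have cK : compact (box `&` closure T).
  apply: compact_closedI; last exact: closed_closure.
  exact: (rV_compact (fun i => @segment_compact R _ _)).
have fc : continuous f.
  have cB : continuous (fun v : V => z - v).
    by move=> v; apply: continuousB; [exact: cst_continuous | exact: cvg_id].
  exact: continuous_dotp.
have [|p /set_mem[_ Tp] pmin] := EVT_min_rV (ex_intro _ t0 _) cK (continuous_subspaceT fc).
  by split; [exact: in_box | exact: subset_closure].
have fpt0 : f p <= f t0.
  by apply: pmin; apply/mem_set; split; [exact: in_box | exact: subset_closure].
exists p => // q Tq; have [fq|/ltW fq] := leP (f q) (f t0); last exact: le_trans fq.
by apply: pmin; apply/mem_set; split => //; exact: in_box.
Qed.

Lemma nearest_obtuse T z p : convexR T -> closure T p ->
    (forall q, closure T q -> dotp (z - p) (z - p) <= dotp (z - q) (z - q)) ->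
  forall t, T t -> dotp (z - p) (t - p) <= 0.
Proof.
move=> cT Tp pmin t Tt; rewrite leNgt; apply/negP => c0.
set c := dotp (z - p) (t - p) in c0; set d := dotp (t - p) (t - p).
have d0 : 0 <= d := dotpp_ge0 _.
pose l := c / (c + d).
have l0 : 0 < l by apply: divr_gt0 => //; lra.
have l1 : l <= 1 by rewrite ler_pdivrMr ?mul1r; lra.
have lc : l ^+ 2 * d <= l * c.
  rewrite expr2 -mulrA; apply: ler_wpM2l; first exact: ltW.
  by rewrite /l mulrAC ler_pdivrMr; nra.
(* stepping from p towards t by l gets strictly closer to z *)
have := pmin _ (closure_convex_comb cT Tp Tt (ltW l0) l1).
have -> : z - (l *: t + (1 - l) *: p) = (z - p) - l *: (t - p).
  by apply/rowP => i; rewrite !mxE; ring.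
by rewrite dotpp_subZ -/c -/d; have := mulr_gt0 l0 c0; lra.
Qed.

Lemma separate_cone T z : convexR T -> T !=set0 ->
    (forall t (s : R), T t -> 0 < s -> T (s *: t)) -> ~ closure T z ->
  exists2 g, g != 0 & forall t, T t -> dotp g t <= 0.
Proof.
move=> cT T0 Tcone zT; have [p Tp pmin] := closure_nearest z T0.
exists (z - p) => [|t Tt]; first by apply/eqP => /subr0_eq zp; apply: zT; rewrite zp.
set b := dotp (z - p) p; set a := dotp (z - p) t.
have ray (s : R) : 0 < s -> s * a <= b.
  move=> s0; have := nearest_obtuse cT Tp pmin (Tcone t s Tt s0).
  by rewrite dotpBr dotpZr subr_le0.
rewrite leNgt; apply/negP => a0.
have := ray ((`|b| + 1) / a) (divr_gt0 (ltr_pwDr ltr01 (normr_ge0 b)) a0).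
by rewrite divfK ?gt_eqF //; have := ler_norm b; lra.
Qed.

Definition cone_at D x : set V :=
  [set v | exists (t : R) d, [/\ 0 < t, D d & v = t *: (d - x)]].

Lemma cone_at_convex D x : convexR D -> convexR (cone_at D x).
Proof.
move=> /convexRP cD; apply/convexRP.
move=> _ _ l l0 l1 [t1 [d1 [t10 Dd1 ->]]] [t2 [d2 [t20 Dd2 ->]]].
pose s := l * t1 + (1 - l) * t2; have s0 : 0 < s by rewrite /s; nra.
pose mu := l * t1 / s.
exists s, (mu *: d1 + (1 - mu) *: d2); split => //.
  apply: cD => //; first by apply: divr_ge0; [rewrite mulr_ge0 // ltW | exact: ltW].
  by rewrite ler_pdivrMr // mul1r /s lerDl; nra.
by apply/rowP => i; rewrite !mxE /mu /s; field; exact: lt0r_neq0.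
Qed.

Lemma cone_atZ D x v (s : R) : cone_at D x v -> 0 < s -> cone_at D x (s *: v).
Proof.
by case=> t [d [t0 Dd ->]] s0; exists (s * t), d; rewrite scalerA mulr_gt0.
Qed.

Lemma supporting_hyperplane D x : convexR D -> D x -> ~ interior D x ->
  exists2 g, g != 0 & forall d, D d -> dotp g d <= dotp g x.
Proof.
move=> cD Dx intx; have cT := cone_at_convex (x := x) cD.
have [clT | /setTPn[z zT]] := eqVneq (closure (cone_at D x)) setT.
  exfalso; apply: intx; apply: interior_of_absorbing cD Dx _ => v.
  have : cone_at D x v by rewrite (convex_closure_setT cT clT).
  case=> t [d [t0 Dd ->]]; exists t^-1; first by rewrite invr_gt0.
  by rewrite scalerA mulVf ?gt_eqF // scale1r addrC subrK.
have T0 : cone_at D x !=set0 by exists 0, 1, x; rewrite subrr scaler0 ltr01.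
have [g g0 sep] := separate_cone cT T0 (@cone_atZ D x) zT.
exists g => // d Dd; rewrite -subr_le0 -dotpBr; apply: sep.
by exists 1, d; rewrite scale1r ltr01.
Qed.

End ConvexGeometry.

Unset Implicit Arguments.
Set Strict Implicit.

Theorem theorem2 (R : realType) (n : nat) (S C : set 'rV[R]_n)
    (Gamma : set ('rV[R]_n * R)) :
  closed S ->
  S_free S C ->
  C = [set x | forall ab, Gamma ab -> dotp ab.1 x <= ab.2] ->
  (forall ab, Gamma ab -> exists x, [/\ S x, C x & exposes C x ab]) ->
  maximal_S_free S C.
Proof.
move=> _ freeC defC exposed; split=> // D [cD DS] CD.
apply/seteqP; split=> // y Dy; apply: contrapT => nCy.
have [ab Gab yab] : exists2 ab, Gamma ab & ab.2 < dotp ab.1 y.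
  apply: contrapT => /forall2NP yC; apply: nCy; rewrite defC => ab Gab.
  by case: (yC ab) => // /negP; rewrite -leNgt.
have [x [Sx Cx [_ [_ exposed_ab]]]] := exposed ab Gab.
have intx : ~ interior D x.
  by move=> intx; have : (interior D `&` S) x by []; rewrite DS.
have [g g0 supp] := supporting_hyperplane cD (CD x Cx) intx.
have [mu mu0 [/= gE gx]] :=
  exposed_ab (g, dotp g x) g0 (fun w Cw => supp w (CD w Cw)) erefl.
by have := supp y Dy; rewrite gx gE dotpZl ler_pM2l // leNgt yab.
Qed.
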